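(* For a real root $\alpha$ let $\pi_\alpha:=\alpha\,(\alpha|\cdot)\in\mathrm{End}(\mathfrak h^* )$, i.e. $\pi_\alpha(x)=(\alpha|x)\alpha$. Define $X:\Delta^{\mathrm{re}}\to\mathrm{End}(\mathrm{Sym}^2(\mathfrak h^* ))$ by $$X(\alpha):=\pi_\alpha\otimes\pi_\alpha-\big(\pi_\alpha\otimes\mathrm{id}_{\mathfrak h^*}+\mathrm{id}_{\mathfrak h^*}\otimes\pi_\alpha\big)+\tfrac12\,\mathrm{id}_{\mathfrak h^*}\otimes\mathrm{id}_{\mathfrak h^*}$$ (restricted to the subspace $\mathrm{Sym}^2(\mathfrak h^* )\subseteq\mathfrak h^*\otimes\mathfrak h^*$ of symmetric tensors, which it preserves). Then for all real roots $\alpha,\beta$: $X(\alpha)X(\beta)-X(\beta)X(\alpha)=0$ if $(\alpha|\beta)=0$, and $X(\alpha)X(\beta)+X(\beta)X(\alpha)=X(\alpha\pm\beta)$ if $(\alpha|\beta)=\mp1$. Consequently the assignment $X_i\mapsto X(\alpha_i)\otimes\Gamma(\alpha_i)\in\mathrm{End}(\mathrm{Sym}^2(\mathfrak h^* )\otimes S)$ extends to a representation $\sigma$ of $\mathfrak k$.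
   Context: Let $A=(a_{ij})_{1\le i,j\le n}$ be a symmetrizable simply laced generalized Cartan matrix (off-diagonal entries $0$ or $-1$); the Dynkin diagram has an edge between $i\ne j$ iff $a_{ij}=-1$. Let $\mathfrak g$ be the split real Kac–Moody algebra of $A$ with Chevalley generators $e_i,f_i$, Cartan subalgebra $\mathfrak h$ (from a real realization), simple roots $\alpha_1,\dots,\alpha_n\in\mathfrak h^*$, set of real roots $\Delta^{\mathrm{re}}$, and let $(\cdot|\cdot)$ be the nondegenerate invariant symmetric bilinear form induced on $\mathfrak h^*$, with $(\alpha_i|\alpha_j)=a_{ij}$ (so $(\alpha|\alpha)=2$ for real roots). Let $\mathfrak k$ be the fixed-point subalgebra of the Chevalley involution ($e_i\mapsto -f_i$, $f_i\mapsto-e_i$, $h\mapsto -h$), with Berman generators $X_i=e_i-f_i$; $\mathfrak k$ is presented by generators $X_1,\dots,X_n$ and relations $[X_i,[X_i,X_j]]=-X_j$ if $a_{ij}=-1$, $[X_i,X_j]=0$ if $a_{ij}=0$. A generalized spin representation is a representation $\rho$ of $\mathfrak k$ with $\rho(X_i)^2=-\frac14\mathrm{id}$. Fix a finite-dimensional real vector space $S$ with positive definite inner product and orthonormal basis, and a generalized spin representation $\rho:\mathfrak k\to\mathrm{End}(S)$ whose values $\rho(X_i)$ are anti-symmetric real matrices in this basis (such exist, e.g. by realifying the generalized spin representations with compact image of Hainke–Köhl–Levy); put $\Gamma(\alpha_i):=2\rho(X_i)$. *)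

From HB Require Import structures.
From mathcomp Require Import all_boot all_order all_algebra.
From mathcomp Require Import mxtens.
Set Implicit Arguments. Unset Strict Implicit. Unset Printing Implicit Defensive.
Import Order.TTheory GRing.Theory Num.Theory.
Local Open Scope ring_scope.

(* Conventions: h* is modelled as column vectors 'cV[R]_d (coordinates in a
   fixed basis); the invariant form is (x|y) := x^T B y for a symmetric
   nondegenerate matrix B.  Endomorphisms act on column vectors from the left,
   so composition of endomorphisms is matrix product.  h* (x) h* is
   'cV_(d*d) via the Kronecker product [tensmx] (notation *t). *)

Section Defs.
Variable R : realFieldType.

Definition invform d (B : 'M[R]_d) (x y : 'cV[R]_d) : R := (x^T *m B *m y) 0 0.

Definition root_refl d (B : 'M[R]_d) (a x : 'cV[R]_d) : 'cV[R]_d :=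
  x - invform B a x *: a.

(* real roots: the Weyl group orbit of the simple roots, i.e. the smallest set
   containing the simple roots and stable under the simple reflections *)
Inductive real_root n d (B : 'M[R]_d) (alpha : 'I_n -> 'cV[R]_d)
  : 'cV[R]_d -> Prop :=
| rr_simple i : real_root B alpha (alpha i)
| rr_refl i x : real_root B alpha x -> real_root B alpha (root_refl B (alpha i) x).

Definition pi_mx d (B : 'M[R]_d) (a : 'cV[R]_d) : 'M[R]_d := a *m a^T *m B.

Definition Xop d (B : 'M[R]_d) (a : 'cV[R]_d) : 'M[R]_(d * d) :=
  pi_mx B a *t pi_mx B a
  - (pi_mx B a *t (1%:M : 'M[R]_d) + (1%:M : 'M[R]_d) *t pi_mx B a)
  + 2^-1 *: ((1%:M : 'M[R]_d) *t (1%:M : 'M[R]_d)).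

Definition sym2 d (v : 'cV[R]_(d * d)) : Prop :=
  forall i j : 'I_d, v (mxtens_index (i, j)) 0 = v (mxtens_index (j, i)) 0.

Definition sym2S d N (w : 'cV[R]_(d * d * N)) : Prop :=
  forall (i j : 'I_d) (k : 'I_N),
    w (mxtens_index (mxtens_index (i, j), k)) 0
    = w (mxtens_index (mxtens_index (j, i), k)) 0.

Definition lie_br m (M M' : 'M[R]_m) : 'M[R]_m := M *m M' - M' *m M.

(* A family Y_i of endomorphisms of R^m, restricted to the invariant subspace
   {v | P v}, satisfies the defining relations of the presentation of k:
   [Y_i,[Y_i,Y_j]] = -Y_j if a_ij = -1 and [Y_i,Y_j] = 0 if a_ij = 0.
   By the presentation of k, this is exactly a representation of k on
   {v | P v} with X_i |-> Y_i. *)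
Definition k_rep_on n m (A : 'M[int]_n) (P : 'cV[R]_m -> Prop)
    (Y : 'I_n -> 'M[R]_m) : Prop :=
  (forall i v, P v -> P (Y i *m v)) /\
  (forall i j, A i j = -1 -> forall v, P v ->
      lie_br (Y i) (lie_br (Y i) (Y j)) *m v = - (Y j *m v)) /\
  (forall i j, A i j = 0 -> forall v, P v -> lie_br (Y i) (Y j) *m v = 0).

End Defs.

Definition simply_laced_gcm n (A : 'M[int]_n) : Prop :=
  (forall i, A i i = 2) /\
  (forall i j, i != j -> A i j = 0 \/ A i j = -1) /\
  (forall i j, A i j = 0 -> A j i = 0).

From HB Require Import structures.
From mathcomp Require Import all_boot all_order all_algebra.
From mathcomp Require Import mxtens.
From mathcomp Require Import ring lra.
Import Order.TTheory GRing.Theory Num.Theory.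
Local Open Scope ring_scope.
Set Implicit Arguments. Unset Strict Implicit. Unset Printing Implicit Defensive.

(* With s_a = 1 - pi_a the reflection in a, X(a) = s_a (x) s_a - 1/2.  If
   (a|b) = 0 the reflections commute, hence so do X(a) and X(b).  If
   (a|b) = -1, then s_a s_b and s_b s_a differ from s_(a+b) by the rank-one
   maps U = a (b|.) and W = b (a|.), and expanding gives
     X(a)X(b) + X(b)X(a) - X(a+b) = pi_a (x) pi_b + pi_b (x) pi_a - U (x) W - W (x) U,
   which vanishes on symmetric tensors because (a r) (x) (b s) and (a s) (x) (b r)
   agree there.  For sigma, Gamma_i^2 = -1 and Gamma_i Gamma_j Gamma_i = Gamma_j
   (when a_ij = -1) reduce [sigma_i, [sigma_i, sigma_j]] to
   -(X_i {X_i, X_j} + {X_i, X_j} X_i) (x) Gamma_j, and two uses of the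
   anticommutator rule, the second with (alpha_i | alpha_i + alpha_j) = 1, turn
   this into -X_j (x) Gamma_j. *)

Section Tensmx.
Variable R : comPzRingType.

Lemma sum_mxtens_index m n (F : 'I_(m * n) -> R) :
  \sum_k F k = \sum_i \sum_j F (mxtens_index (i, j)).
Proof.
rewrite pair_big /= [LHS](reindex (@mxtens_index m n)) /=.
  by apply: eq_bigr => -[i j].
by exists (@mxtens_unindex m n) => k _; [apply: mxtens_indexK | apply: mxtens_unindexK].
Qed.

Lemma tensmx_eqP m n p q (M M' : 'M[R]_(m * n, p * q)) :
  (forall i j k l, M (mxtens_index (i, j)) (mxtens_index (k, l))
                   = M' (mxtens_index (i, j)) (mxtens_index (k, l))) ->
  M = M'.
Proof.
move=> eqM; apply/matrixP => x y.
by case: (mxtens_indexP x) => i j; case: (mxtens_indexP y) => k l.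
Qed.

Lemma tensmx11 m n : (1%:M : 'M[R]_m) *t (1%:M : 'M[R]_n) = 1%:M.
Proof.
apply: tensmx_eqP => i j k l; rewrite tensmxE !mxE -natrM mulnb.
by rewrite (inj_eq (can_inj (@mxtens_indexK m n))) xpair_eqE.
Qed.

Lemma tensmx_mulmxE m n p q (X : 'M[R]_(m, n)) (Y : 'M[R]_(p, q))
    (v : 'cV[R]_(n * q)) i j :
  ((X *t Y) *m v) (mxtens_index (i, j)) 0
  = \sum_k \sum_l X i k * Y j l * v (mxtens_index (k, l)) 0.
Proof.
rewrite mxE sum_mxtens_index; apply: eq_bigr => k _; apply: eq_bigr => l _.
by rewrite tensmxE.
Qed.

Definition slice m n (w : 'cV[R]_(m * n)) (k : 'I_n) : 'cV[R]_m :=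
  \col_l w (mxtens_index (l, k)) 0.

Lemma slice_inj m n (w w' : 'cV[R]_(m * n)) :
  (forall k, slice w k = slice w' k) -> w = w'.
Proof.
move=> eqw; apply/matrixP => x z; rewrite [z]ord1.
by case: (mxtens_indexP x) => l k; move/matrixP: (eqw k) => /(_ l 0); rewrite !mxE.
Qed.

Lemma slice_tensmx_mul m n p q (D : 'M[R]_(m, n)) (T : 'M[R]_(p, q))
    (w : 'cV[R]_(n * q)) k :
  slice ((D *t T) *m w) k = D *m \sum_k' T k k' *: slice w k'.
Proof.
apply/matrixP => l z; rewrite [z]ord1 mxE tensmx_mulmxE mxE.
apply: eq_bigr => l' _; rewrite summxE mulr_sumr; apply: eq_bigr => k' _.
by rewrite !mxE mulrA.
Qed.

End Tensmx.

Section Sym2.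
Variable R : realFieldType.

Lemma sym2_tensmx_swap d m (X Y : 'M[R]_(m, d)) (v : 'cV[R]_(d * d)) i j :
  sym2 v ->
  ((X *t Y) *m v) (mxtens_index (i, j)) 0 = ((Y *t X) *m v) (mxtens_index (j, i)) 0.
Proof.
move=> sv; rewrite !tensmx_mulmxE [RHS]exchange_big.
by apply: eq_bigr => k _; apply: eq_bigr => l _; rewrite (sv l k) [Y j l * _]mulrC.
Qed.

Lemma sym2_tensmx_sqr d (S : 'M[R]_d) v : sym2 v -> sym2 ((S *t S) *m v).
Proof. by move=> sv i j; rewrite sym2_tensmx_swap. Qed.

Lemma sym2_tensmx_rank1 d (a b : 'cV[R]_d) (r s : 'rV[R]_d) v : sym2 v ->
  ((a *m r) *t (b *m s)) *m v = ((a *m s) *t (b *m r)) *m v.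
Proof.
move=> sv; rewrite -!tensmx_mul -!mulmxA; congr (_ *m _).
apply/matrixP => x z; rewrite [z]ord1; case: (mxtens_indexP x) => i j.
by rewrite sym2_tensmx_swap // [i]ord1 [j]ord1.
Qed.

Lemma sym2D d (u v : 'cV[R]_(d * d)) : sym2 u -> sym2 v -> sym2 (u + v).
Proof. by move=> su sv i j; rewrite !mxE su sv. Qed.

Lemma sym2Z d c (v : 'cV[R]_(d * d)) : sym2 v -> sym2 (c *: v).
Proof. by move=> sv i j; rewrite !mxE sv. Qed.

Lemma sym2_sum d N (v : 'I_N -> 'cV[R]_(d * d)) :
  (forall k, sym2 (v k)) -> sym2 (\sum_k v k).
Proof. by move=> sv i j; rewrite !summxE; apply: eq_bigr => k _; apply: sv. Qed.

Lemma sym2S_sliceP d N (w : 'cV[R]_(d * d * N)) :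
  sym2S w <-> forall k, sym2 (slice w k).
Proof.
split=> [sw k i j | sw i j k]; first by rewrite !mxE sw.
by have := sw k i j; rewrite !mxE.
Qed.

Lemma sym2S_tensmx_mul d N p (D : 'M[R]_(d * d)) (T : 'M[R]_(N, p)) w :
  (forall v, sym2 v -> sym2 (D *m v)) -> sym2S w -> sym2S ((D *t T) *m w).
Proof.
move=> sD /sym2S_sliceP sw; apply/sym2S_sliceP => k.
by rewrite slice_tensmx_mul; apply/sD/sym2_sum => k'; apply/sym2Z/sw.
Qed.

Lemma tensmx_mulmx_sym2S_eq d N p m (D D' : 'M[R]_(m, d * d)) (T : 'M[R]_(N, p)) w :
  (forall v, sym2 v -> D *m v = D' *m v) -> sym2S w ->
  (D *t T) *m w = (D' *t T) *m w.
Proof.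
move=> eqD /sym2S_sliceP sw; apply: slice_inj => k.
by rewrite !slice_tensmx_mul; apply/eqD/sym2_sum => k'; apply/sym2Z/sw.
Qed.

End Sym2.

Section Xmx.
Variables (R : realFieldType) (d : nat).
Implicit Types S T U W : 'M[R]_d.

Definition Xmx S : 'M[R]_(d * d) := S *t S - 2^-1 *: 1%:M.

Lemma Xmx_mul S T :
  Xmx S *m Xmx T
  = (S *m T) *t (S *m T) - 2^-1 *: (S *t S + T *t T) + 4^-1 *: 1%:M.
Proof.
rewrite /Xmx mulmxBl !mulmxBr -!scalemxAr -!scalemxAl !mulmx1 !mul1mx tensmx_mul.
move: (S *m T *t (S *m T)) (S *t S) (T *t T) => ST SS TT.
by apply/matrixP => i j; rewrite !mxE; field.
Qed.

Lemma Xmx_comm S T : S *m T = T *m S -> Xmx S *m Xmx T = Xmx T *m Xmx S.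
Proof. by move=> ST; rewrite !Xmx_mul ST [S *t S + _]addrC. Qed.

Lemma Xmx_anticomm S T U W :
  S *m T = S + T - 1%:M - U -> T *m S = S + T - 1%:M - W ->
  Xmx S *m Xmx T + Xmx T *m Xmx S
  = Xmx (S + T - 1%:M - U - W)
    + ((1%:M - S) *t (1%:M - T) + (1%:M - T) *t (1%:M - S) - U *t W - W *t U).
Proof.
move=> ST TS; rewrite !Xmx_mul ST TS /Xmx -tensmx11.
by apply: tensmx_eqP => i j k l; rewrite !mxE !mxtens_indexK /=; field.
Qed.

End Xmx.

Section RootOperators.
Variables (R : realFieldType) (d : nat) (B : 'M[R]_d).
Hypothesis symB : B^T = B.
Implicit Types a b : 'cV[R]_d.

Definition refl_mx a : 'M[R]_d := 1%:M - pi_mx B a.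

Lemma invformC a b : invform B a b = invform B b a.
Proof.
rewrite /invform.
have -> : (a^T *m B *m b) 0 0 = ((a^T *m B *m b)^T) 0 0 by rewrite [RHS]mxE.
by rewrite !trmx_mul trmxK symB mulmxA.
Qed.

Lemma pi_mx_mul a b :
  pi_mx B a *m pi_mx B b = invform B a b *: (a *m (b^T *m B)).
Proof.
have ab : a^T *m B *m b = (invform B a b)%:M by rewrite [LHS]mx11_scalar.
rewrite /pi_mx -!mulmxA [a^T *m _]mulmxA [a^T *m B *m _]mulmxA ab.
by rewrite mul_scalar_mx -scalemxAr.
Qed.

Lemma refl_mx_mul a b :
  refl_mx a *m refl_mx b
  = refl_mx a + refl_mx b - 1%:M + invform B a b *: (a *m (b^T *m B)).
Proof.
rewrite /refl_mx mulmxBl !mulmxBr !mulmx1 !mul1mx pi_mx_mul.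
move: (pi_mx B a) (pi_mx B b) (_ *: _) => P Q PQ.
by apply/matrixP => i j; rewrite !mxE; ring.
Qed.

Lemma refl_mxD a b :
  refl_mx (a + b)
  = refl_mx a + refl_mx b - 1%:M - a *m (b^T *m B) - b *m (a^T *m B).
Proof.
rewrite /refl_mx /pi_mx linearD /= !(mulmxDl, mulmxDr) -!mulmxA.
by apply/matrixP => i j; rewrite !mxE; ring.
Qed.

Lemma refl_mxN a : refl_mx (- a) = refl_mx a.
Proof. by rewrite /refl_mx /pi_mx linearN /= mulNmx mulmxN opprK. Qed.

Lemma Xop_refl a : Xop B a = Xmx (refl_mx a).
Proof.
rewrite /Xop /Xmx /refl_mx -tensmx11.
by apply: tensmx_eqP => i j k l; rewrite !mxE !mxtens_indexK /=; field.
Qed.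

Lemma XopN a : Xop B (- a) = Xop B a.
Proof. by rewrite !Xop_refl refl_mxN. Qed.

Lemma Xop_sym2 a v : sym2 v -> sym2 (Xop B a *m v).
Proof.
move=> sv; rewrite Xop_refl /Xmx mulmxBl -scalemxAl mul1mx -scaleNr.
by apply: sym2D; [apply: sym2_tensmx_sqr | apply: sym2Z].
Qed.

Lemma Xop_comm a b : invform B a b = 0 -> Xop B a *m Xop B b = Xop B b *m Xop B a.
Proof.
move=> ab; rewrite !Xop_refl; apply: Xmx_comm.
by rewrite !refl_mx_mul ab invformC ab !scale0r !addr0 [refl_mx a + _]addrC.
Qed.

Lemma Xop_anticomm a b v : invform B a b = -1 -> sym2 v ->
  (Xop B a *m Xop B b + Xop B b *m Xop B a) *m v = Xop B (a + b) *m v.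
Proof.
move=> ab sv; have ba : invform B b a = -1 by rewrite invformC.
rewrite !Xop_refl refl_mxD.
rewrite (Xmx_anticomm (U := a *m (b^T *m B)) (W := b *m (a^T *m B))); last 2 first.
- by rewrite refl_mx_mul ab scaleN1r.
- by rewrite refl_mx_mul ba scaleN1r [refl_mx b + _]addrC.
have pi_refl c : 1%:M - refl_mx c = c *m (c^T *m B).
  by rewrite /refl_mx opprB addrC subrK /pi_mx mulmxA.
rewrite mulmxDl -[RHS]addr0; congr (_ + _).
rewrite !pi_refl !mulmxBl mulmxDl (sym2_tensmx_rank1 a b _ _ sv).
by rewrite (sym2_tensmx_rank1 b a _ _ sv) addrAC addrK subrr.
Qed.

Lemma Xop_anticomm_sub a b v : invform B a b = 1 -> sym2 v ->
  (Xop B a *m Xop B b + Xop B b *m Xop B a) *m v = Xop B (a - b) *m v.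
Proof.
move=> ab sv; rewrite -(XopN b) Xop_anticomm //.
by rewrite /invform mulmxN mxE -/(invform B a b) ab.
Qed.

End RootOperators.

Section Brackets.
Variable R : realFieldType.

Lemma mulmx_cVP m n (M M' : 'M[R]_(m, n)) :
  (forall v : 'cV[R]_n, M *m v = M' *m v) -> M = M'.
Proof.
move=> eqM; apply/trmx_inj/eqP/mulmxP => u.
by rewrite -[u]trmxK -!trmx_mul eqM.
Qed.

Lemma lie_br_tensmx_braid m N (x y : 'M[R]_m) (g h : 'M[R]_N) :
  g *m g = - 1%:M -> g *m h *m g = h ->
  lie_br (x *t g) (lie_br (x *t g) (y *t h))
  = - ((x *m (x *m y + y *m x) + (x *m y + y *m x) *m x) *t h).
Proof.
move=> gg ghg; rewrite /lie_br mulmxBr mulmxBl !tensmx_mul !mulmxA ghg gg.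
rewrite -(mulmxA h) gg mulNmx mulmxN mul1mx mulmx1 !(mulmxDl, mulmxDr) !mulmxA.
move: (x *m x *m y) (x *m y *m x) (y *m x *m x) => xxy xyx yxx.
by apply: tensmx_eqP => i j k l; rewrite !mxE !mxtens_indexK /=; ring.
Qed.

Lemma lie_br_tensmx_comm m N (x y : 'M[R]_m) (g h : 'M[R]_N) :
  x *m y = y *m x -> g *m h = h *m g -> lie_br (x *t g) (y *t h) = 0.
Proof. by move=> xy gh; rewrite /lie_br !tensmx_mul xy gh subrr. Qed.

Lemma spin_sqr N (r : 'M[R]_N) :
  r *m r = - (4^-1 *: 1%:M) -> (2 *: r) *m (2 *: r) = - 1%:M.
Proof.
move=> rr; rewrite -scalemxAl -scalemxAr rr.
by apply/matrixP => i j; rewrite !mxE; field.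
Qed.

Lemma spin_braid N (r t : 'M[R]_N) :
  r *m r = - (4^-1 *: 1%:M) -> lie_br r (lie_br r t) = - t ->
  (2 *: r) *m (2 *: t) *m (2 *: r) = 2 *: t.
Proof.
move=> rr brt; have rtr : r *m t *m r = 4^-1 *: t.
  rewrite /lie_br mulmxBr mulmxBl !mulmxA rr -(mulmxA t) rr in brt.
  rewrite mulNmx mulmxN -scalemxAl -scalemxAr mul1mx mulmx1 in brt.
  move: (r *m t *m r) brt => M /matrixP brt; apply/matrixP => i j.
  by move: (brt i j); rewrite !mxE => ?; lra.
rewrite -!scalemxAl -!scalemxAr -scalemxAl !scalerA rtr.
by apply/matrixP => i j; rewrite !mxE; field.
Qed.

Lemma spin_comm N (r t : 'M[R]_N) :
  lie_br r t = 0 -> (2 *: r) *m (2 *: t) = (2 *: t) *m (2 *: r).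
Proof.
by move/eqP; rewrite subr_eq0 => /eqP rt; rewrite -!scalemxAl -!scalemxAr rt.
Qed.

End Brackets.

Section SpinTensorRep.
Variables (R : realFieldType) (d N : nat) (B : 'M[R]_d).
Hypothesis symB : B^T = B.
Implicit Types (a b : 'cV[R]_d) (g h : 'M[R]_N) (w : 'cV[R]_(d * d * N)).

Lemma Xop_tensmx_sym2S a g w : sym2S w -> sym2S ((Xop B a *t g) *m w).
Proof. by apply: sym2S_tensmx_mul => v; apply: Xop_sym2. Qed.

Lemma Xop_tensmx_braid a b g h w :
  invform B a a = 2 -> invform B a b = -1 ->
  g *m g = - 1%:M -> g *m h *m g = h -> sym2S w ->
  lie_br (Xop B a *t g) (lie_br (Xop B a *t g) (Xop B b *t h)) *m w
  = - ((Xop B b *t h) *m w).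
Proof.
move=> aa ab gg ghg sw; rewrite lie_br_tensmx_braid // mulNmx; congr (- _).
apply: tensmx_mulmx_sym2S_eq => // v sv.
have a_ab : invform B a (a + b) = 1.
  by rewrite /invform mulmxDr mxE -!/(invform B _ _) aa ab; ring.
rewrite mulmxDl -!mulmxA (Xop_anticomm symB ab sv).
rewrite (Xop_anticomm symB ab (Xop_sym2 B a sv)).
by rewrite !mulmxA -mulmxDl Xop_anticomm_sub // opprD addNKr XopN.
Qed.

Lemma Xop_tensmx_comm a b g h :
  invform B a b = 0 -> g *m h = h *m g ->
  lie_br (Xop B a *t g) (Xop B b *t h) = 0.
Proof. by move=> ab gh; apply: lie_br_tensmx_comm; rewrite // Xop_comm. Qed.

End SpinTensorRep.

Theorem proposition6p5 (R : realFieldType) (n d N : nat) (A : 'M[int]_n)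
    (B : 'M[R]_d) (alpha : 'I_n -> 'cV[R]_d) (rho : 'I_n -> 'M[R]_N) :
  simply_laced_gcm A ->
  (* realization: dim h* = 2n - rank A, simple roots linearly independent *)
  d = (2 * n - \rank (map_mx (fun z : int => z%:~R : R) A))%N ->
  row_free (\matrix_(i < n) (alpha i)^T) ->
  (* nondegenerate invariant symmetric form with (alpha_i|alpha_j) = a_ij *)
  B^T = B -> B \in unitmx ->
  (forall i j, invform B (alpha i) (alpha j) = (A i j)%:~R) ->
  (* generalized spin representation with anti-symmetric values *)
  k_rep_on A (fun _ => True) rho ->
  (forall i, rho i *m rho i = - (4^-1 *: 1%:M)) ->
  (forall i, (rho i)^T = - rho i) ->
  (* X(a) preserves Sym^2 h*  *)
  (forall a, real_root B alpha a ->
     forall v, sym2 v -> sym2 (Xop B a *m v)) /\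
  (* commutation relations on Sym^2 h*  *)
  (forall a b, real_root B alpha a -> real_root B alpha b ->
     (invform B a b = 0 ->
        forall v, sym2 v -> (Xop B a *m Xop B b - Xop B b *m Xop B a) *m v = 0) /\
     (invform B a b = -1 ->
        forall v, sym2 v ->
          (Xop B a *m Xop B b + Xop B b *m Xop B a) *m v = Xop B (a + b) *m v) /\
     (invform B a b = 1 ->
        forall v, sym2 v ->
          (Xop B a *m Xop B b + Xop B b *m Xop B a) *m v = Xop B (a - b) *m v)) /\
  (* X_i |-> X(alpha_i) (x) Gamma(alpha_i), Gamma(alpha_i) = 2 rho(X_i),
     defines a representation sigma of k on Sym^2 h* (x) S *)
  k_rep_on A (@sym2S R d N) (fun i => Xop B (alpha i) *t (2 *: rho i)).
Proof.
move=> [A_diag _] _ _ symB _ formA [_ [rho_braid rho_comm]] rho_sqr _.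
split; first by move=> a _ v; apply: Xop_sym2.
split.
  move=> a b _ _; split; [|split] => ab v sv.
  - by rewrite (Xop_comm symB ab) subrr mul0mx.
  - exact: Xop_anticomm.
  - exact: Xop_anticomm_sub.
split; [|split] => i.
- by move=> w; apply: Xop_tensmx_sym2S.
- move=> j aij w sw; apply: Xop_tensmx_braid => //.
  + by rewrite formA A_diag.
  + by rewrite formA aij.
  + exact: spin_sqr.
  + apply: spin_braid => //; apply: mulmx_cVP => v.
    by rewrite mulNmx; apply: rho_braid.
- move=> j aij w _; rewrite Xop_tensmx_comm ?mul0mx ?formA ?aij //.
  by apply: spin_comm; apply: mulmx_cVP => v; rewrite mul0mx; apply: rho_comm.
Qed.
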